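(* For each $D\in\mathbb N$ let $H^{(D)}$ be a random Hermitian $D\times D$ matrix satisfying Assumptions S1–S4, with an orthonormal eigenbasis $\phi_1,\dots,\phi_D$, and let $D_0:(0,\infty)^2\to\mathbb N$ be a function such that for all $\tau,\alpha>0$, all $D\ge D_0(\tau,\alpha)$ and all $n\in[D]$, $\mathbb P(\|\phi_n\|_\infty>D^{\tau-1/2})\le D^{-\alpha}$ (such a function exists by the Ajanki–Erdős–Krüger delocalization theorem). Let $\tau>0$, $\alpha>1$, $D\ge D_0(\tau,\alpha)$, and let $B$ be a Hermitian $D\times D$ matrix. Then with probability at least $1-D^{-\alpha+1}$, for every macro state $\mu$, $$|M_{\mu B}|\ge\max\Bigl\{b^+_{\min},\frac{\mathrm{tr}(B^+)}{d_\mu}\Bigl(1-\frac{D-d_\mu}{D^{1-2\tau}}\Bigr)\Bigr\}-\min\Bigl\{b^-_{\max},\frac{\mathrm{tr}(B^-)}{d_\mu}\Bigr\},$$ and for all macro states $\mu,\nu$, $$M_{\mu\nu}\ge\frac{d_\nu}{d_\mu}\Bigl(1-\frac{D-d_\mu}{D^{1-2\tau}}\Bigr)\quad\text{and}\quad M_{\mu\nu}\ge1-\frac{D-d_\nu}{D^{1-2\tau}}.$$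
   Context: Setting: $\mathcal H=\mathbb C^D$ with standard basis; $[D]$ partitioned into consecutive blocks $I_\nu$ (macro states), $\mathcal H_\nu=\mathrm{span}\{|j\rangle:j\in I_\nu\}$, $d_\nu=\dim\mathcal H_\nu$, $P_\nu$ orthogonal projection. Here $M_{\mu B}=\frac1{d_\mu}\sum_{n=1}^D\langle\phi_n|P_\mu|\phi_n\rangle\langle\phi_n|B|\phi_n\rangle$ and $M_{\mu\nu}=M_{\mu P_\nu}$ (for non-degenerate $H$ this equals $\frac1{d_\mu}\sum_e\mathrm{tr}(P_\mu\Pi_eB\Pi_e)$). $B^\pm$ are positive/negative parts of $B$, $b^+_{\min}$ smallest eigenvalue of $B^+$, $b^-_{\max}$ largest eigenvalue of $B^-$. $\|\phi\|_\infty=\max_j|\phi(j)|$. Fix parameters $p,P>0$, $L\in\mathbb N$, and a sequence $(\mu_k)_{k\in\mathbb N}$ of nonnegative reals, independent of $D$. S1: $H^{(D)}=(h_{ij})$ is of Wigner type (centered entries, $(h_{ij})_{i\le j}$ independent) and $\sigma_{ij}^2:=\mathbb E|h_{ij}|^2\le 1/D$ for all $i,j$. S2: the matrix $S=(\sigma_{ij}^2)$ satisfies $(S^L)_{ij}\ge p/D$ for all $i,j$. S3: the unique solution $m=(m_1,\dots,m_D):\mathbb H\to\mathbb H^D$ ($\mathbb H$ the complex upper half-plane) of the vector Dyson equation $-1/m_i(z)=z+\sum_j\sigma_{ij}^2m_j(z)$ satisfies $|m_i(z)|\le P$ for all $i$ and $z\in\mathbb H$. S4: $\mathbb E|h_{ij}|^k\le\mu_k\sigma_{ij}^k$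 for all $k\in\mathbb N$, $i,j$. *)

From HB Require Import structures.
From mathcomp Require Import all_boot all_order all_algebra.
From mathcomp Require Import all_classical all_reals all_analysis.
From mathcomp Require Import complex.

Set Implicit Arguments.
Unset Strict Implicit.
Unset Printing Implicit Defensive.

Import Order.TTheory GRing.Theory Num.Theory.
Local Open Scope ring_scope.
Local Open Scope classical_set_scope.
Local Open Scope complex_scope.

Section Defs.
Variable R : realType.
Local Notation C := R[i].

Definition reC (z : C) : R := complex.Re z.
Definition imC (z : C) : R := complex.Im z.

Definition cmod (z : C) : R := Num.sqrt (reC z ^+ 2 + imC z ^+ 2).

Definition adjmx m n (A : 'M[C]_(m, n)) : 'M[C]_(n, m) := (map_mx Num.conj A)^T.

Definition cdot n (u v : 'cV[C]_n) : C := (adjmx u *m v) 0 0.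

Definition qform n (A : 'M[C]_n) (v : 'cV[C]_n) : C := (adjmx v *m A *m v) 0 0.

Definition supnorm n (v : 'cV[C]_n) : R := \big[Num.max/0]_(j < n) cmod (v j 0).

(** Macro states: a labelling blk : [D] -> [m] of indices by macro states,
    blocks I_nu = blk^-1(nu). *)
Definition consecutive_partition D m (blk : 'I_D -> 'I_m) : Prop :=
  (forall i j : 'I_D, (i <= j)%N -> (blk i <= blk j)%N) /\
  (forall nu : 'I_m, exists j : 'I_D, blk j = nu).

Definition dimM D m (blk : 'I_D -> 'I_m) (nu : 'I_m) : nat := #|[set j | blk j == nu]|.

(** orthogonal projection P_nu onto H_nu = span{|j> : j in I_nu} *)
Definition projM D m (blk : 'I_D -> 'I_m) (nu : 'I_m) : 'M[C]_D :=
  diag_mx (\row_j (if blk j == nu then 1 else 0)).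

Definition MB D m (blk : 'I_D -> 'I_m) (phi : 'I_D -> 'cV[C]_D) (mu : 'I_m)
    (B : 'M[C]_D) : C :=
  ((dimM blk mu)%:R)^-1 *
    \sum_(n < D) qform (projM blk mu) (phi n) * qform B (phi n).

Definition Mmn D m (blk : 'I_D -> 'I_m) (phi : 'I_D -> 'cV[C]_D) (mu nu : 'I_m) : C :=
  MB blk phi mu (projM blk nu).

(** Positive and negative parts of a Hermitian matrix via spectral calculus:
    B = U^* diag(b) U with U unitary (spectral theorem, mathcomp spectral.v),
    B^+ = U^* diag(max(b,0)) U, B^- = U^* diag(max(-b,0)) U. *)
Definition posmx D (B : 'M[C]_D) : 'M[C]_D :=
  adjmx (spectralmx B) *m
    diag_mx (\row_i ((Num.max (reC (spectral_diag B 0 i)) 0)%:C)) *m spectralmx B.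
Definition negmx D (B : 'M[C]_D) : 'M[C]_D :=
  adjmx (spectralmx B) *m
    diag_mx (\row_i ((Num.max (- reC (spectral_diag B 0 i)) 0)%:C)) *m spectralmx B.

Definition eig_min D (A : 'M[C]_D) : R := inf [set x : R | eigenvalue A x%:C].
Definition eig_max D (A : 'M[C]_D) : R := sup [set x : R | eigenvalue A x%:C].

Section Random.
Context {d : measure_display} {T : measurableType d} (P : probability T R).
Local Open Scope ereal_scope.

Definition sig2e D (h : T -> 'M[C]_D) (i j : 'I_D) : \bar R :=
  \int[P]_w ((cmod (h w i j) ^+ 2)%R)%:E.
Definition sig2 D (h : T -> 'M[C]_D) (i j : 'I_D) : R := fine (sig2e h i j).

(** the entries (h_ij)_{i<=j} (as R^2-valued random variables (Re, Im))
    are mutually independent *)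
Definition upper_entries_independent D (h : T -> 'M[C]_D) : Prop :=
  forall A : 'I_D -> 'I_D -> set (R * R)%type,
    (forall i j, measurable (A i j)) ->
    P (\bigcap_(k in [set k : 'I_D * 'I_D | (k.1 <= k.2)%N])
         [set w | (reC (h w k.1 k.2), imC (h w k.1 k.2)) \in A k.1 k.2]) =
    \prod_(k : 'I_D * 'I_D | (k.1 <= k.2)%N)
         P [set w | (reC (h w k.1 k.2), imC (h w k.1 k.2)) \in A k.1 k.2].

Definition S1 D (h : T -> 'M[C]_D) : Prop :=
  (forall w, h w \is hermsymmx) /\
  (forall i j, measurable_fun setT (fun w => (reC (h w i j), imC (h w i j)))) /\
  (forall i j, P.-integrable setT (fun w => (reC (h w i j))%:E) /\
               P.-integrable setT (fun w => (imC (h w i j))%:E) /\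
               \int[P]_w (reC (h w i j))%:E = 0 /\
               \int[P]_w (imC (h w i j))%:E = 0) /\
  upper_entries_independent h /\
  (forall i j, sig2e h i j <= ((D%:R)^-1)%:E).

Definition Smx D (h : T -> 'M[C]_D) : 'M[R]_D := \matrix_(i, j) sig2 h i j.

Definition S2 (p : R) (L : nat) D (h : T -> 'M[C]_D) : Prop :=
  forall i j, (p / D%:R <= (iter L (mulmx (Smx h)) 1%:M) i j)%R.

(** Assumption S3: the solution of the vector Dyson equation
    -1/m_i(z) = z + sum_j sigma_ij^2 m_j(z), m : H -> H^D, is bounded by P.
    (For each z in H this equation has a unique solution in H^D.) *)
Definition S3 (Pb : R) D (h : T -> 'M[C]_D) : Prop :=
  forall (z : C) (w : 'I_D -> C), (0 < imC z)%R ->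
    (forall i, (0 < imC (w i))%R /\
               (- (w i)^-1 = z + \sum_j (sig2 h i j)%:C * w j)%R) ->
    forall i, (cmod (w i) <= Pb)%R.

Definition S4 (mu : nat -> R) D (h : T -> 'M[C]_D) : Prop :=
  forall (k : nat) (i j : 'I_D), (0 < k)%N ->
    \int[P]_w ((cmod (h w i j) ^+ k)%R)%:E <=
      ((mu k) * (Num.sqrt (sig2 h i j)) ^+ k)%:E.

End Random.
End Defs.

(** On the event where every eigenvector is delocalized, [||phi_n||_oo <= D^(tau - 1/2)],
    the weight [w_mu(n) = <phi_n|P_mu|phi_n>] lies in [[0, 1]], [sum_n w_mu(n) = tr P_mu
    = d_mu], and [1 - w_mu(n)], the mass of [phi_n] outside the block [I_mu], is at most
    [(D - d_mu) D^(2 tau - 1)].  With [B = B^+ - B^-], [M_(mu B)] is the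
    [w_mu]-weighted mean of [<phi_n|B^+|phi_n> - <phi_n|B^-|phi_n>]; each term lies
    between the extreme eigenvalues of [B^+] resp. [B^-] and the sums over [n] are the
    traces, which gives the bound on [M_(mu B)]; those on [M_(mu nu)] follow from the
    same facts on the weights.  A union bound over the [D] eigenvectors gives the
    probability [1 - D * D^(-alpha)].  Assumptions S1-S4 enter only through [D_0]. *)
From HB Require Import structures.
From mathcomp Require Import all_boot all_order all_algebra.
From mathcomp Require Import all_classical all_reals all_analysis.
From mathcomp Require Import complex.
From mathcomp Require Import ring lra.

Set Implicit Arguments.
Unset Strict Implicit.
Import Order.TTheory GRing.Theory Num.Theory.
Local Open Scope ring_scope.
Local Open Scope complex_scope.

Section ComplexMatrices.
Variable R : realType.
Local Notation C := R[i].

Definition cnorm2 (z : C) : R := reC z ^+ 2 + imC z ^+ 2.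

Lemma cnorm2_ge0 z : 0 <= cnorm2 z.
Proof. by rewrite /cnorm2 addr_ge0 // sqr_ge0. Qed.

Lemma cnorm2_eq0 (z : C) : cnorm2 z = 0 -> z = 0.
Proof.
case: z => a b; rewrite /cnorm2 /reC /imC /= => h.
have ha : a ^+ 2 = 0 by apply/eqP; rewrite eq_le sqr_ge0 andbT -h lerDl sqr_ge0.
have hb : b ^+ 2 = 0 by move: h; rewrite ha add0r.
by move/eqP: ha; rewrite sqrf_eq0 => /eqP ->; move/eqP: hb; rewrite sqrf_eq0 => /eqP ->.
Qed.

Lemma mul_conjC_cnorm2 (z : C) : Num.conj z * z = (cnorm2 z)%:C.
Proof.
case: z => a b; rewrite /cnorm2 /reC /imC /=.
by apply/eqP; rewrite eq_complex /=; apply/andP; split; apply/eqP; ring.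
Qed.

Lemma sqr_cmod z : cmod z ^+ 2 = cnorm2 z.
Proof. by rewrite /cmod sqr_sqrtr // cnorm2_ge0. Qed.

Lemma reC_le_cmod (z : C) : reC z <= cmod z.
Proof.
rewrite /cmod; apply: (le_trans (ler_norm _)); rewrite -sqrtr_sqr.
by apply: ler_wsqrtr; rewrite lerDl sqr_ge0.
Qed.

Lemma reCD (y z : C) : reC (y + z) = reC y + reC z.
Proof. by case: y; case: z. Qed.

Lemma reCN (z : C) : reC (- z) = - reC z.
Proof. by case: z. Qed.

Lemma reC_sum (I : Type) (r : seq I) (P : pred I) (F : I -> C) :
  reC (\sum_(i <- r | P i) F i) = \sum_(i <- r | P i) reC (F i).
Proof. exact: (big_morph _ reCD). Qed.

Lemma reC_mulRC (x : R) (z : C) : reC (x%:C * z) = x * reC z.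
Proof. by case: z => a b; rewrite /reC /= mul0r subr0. Qed.

Lemma natrC k : (k%:R : C) = (k%:R : R)%:C.
Proof. by rewrite rmorph_nat. Qed.

Lemma adjmxE m n (A : 'M[C]_(m, n)) : adjmx A = (A ^t* )%sesqui.
Proof. by rewrite /adjmx map_trmx. Qed.

Lemma adjmxM m n p (A : 'M[C]_(m, n)) (B : 'M[C]_(n, p)) :
  adjmx (A *m B) = adjmx B *m adjmx A.
Proof. by rewrite /adjmx map_mxM trmx_mul. Qed.

Lemma adjmxK m n (A : 'M[C]_(m, n)) : adjmx (adjmx A) = A.
Proof. by apply/matrixP => i j; rewrite !mxE conjCK. Qed.

Lemma qformD n (A B : 'M[C]_n) v : qform (A + B) v = qform A v + qform B v.
Proof. by rewrite /qform mulmxDr mulmxDl mxE. Qed.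

Lemma qformN n (A : 'M[C]_n) v : qform (- A) v = - qform A v.
Proof. by rewrite /qform mulmxN mulNmx mxE. Qed.

Lemma qform_adjmx_conj n (Q A : 'M[C]_n) (v : 'cV[C]_n) :
  qform (adjmx Q *m A *m Q) v = qform A (Q *m v).
Proof. by rewrite /qform adjmxM !mulmxA. Qed.

Lemma qform_diag n (c : 'I_n -> R) (v : 'cV[C]_n) :
  qform (diag_mx (\row_j (c j)%:C)) v = (\sum_j c j * cnorm2 (v j 0))%:C.
Proof.
rewrite /qform mul_mx_diag mxE rmorph_sum /=; apply: eq_bigr => j _.
rewrite !mxE /= -mulrA mulrC -mulrA [v j 0 * _]mulrC mul_conjC_cnorm2.
by rewrite rmorphM mulrC.
Qed.

Lemma cdot_self n (v : 'cV[C]_n) : cdot v v = (\sum_j cnorm2 (v j 0))%:C.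
Proof.
have -> : cdot v v = qform (diag_mx (\row_j (1 : R)%:C)) v.
  rewrite /cdot /qform; congr (_ 0 0).
  have -> : diag_mx (\row_j (1 : R)%:C) = 1%:M :> 'M[C]_n.
    by apply/matrixP => i j; rewrite !mxE.
  by rewrite mulmx1.
by rewrite qform_diag; under eq_bigr do rewrite mul1r.
Qed.

Lemma sum_cnorm2_isometry n (Q : 'M[C]_n) (v : 'cV[C]_n) : adjmx Q *m Q = 1%:M ->
  \sum_i cnorm2 ((Q *m v) i 0) = \sum_i cnorm2 (v i 0).
Proof.
move=> QQ; apply: (@complexI R); rewrite -!cdot_self /cdot adjmxM.
by rewrite -mulmxA (mulmxA (adjmx Q)) QQ mul1mx.
Qed.

Section UnitaryDiag.
Variables (n : nat) (Q : 'M[C]_n) (c : 'I_n -> R).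
Hypothesis QQadj : Q *m adjmx Q = 1%:M.
Hypothesis QadjQ : adjmx Q *m Q = 1%:M.
Hypothesis c_ge0 : forall i, 0 <= c i.
Let A := adjmx Q *m diag_mx (\row_i (c i)%:C) *m Q.

Lemma qform_unitary_diag v : qform A v = (\sum_i c i * cnorm2 ((Q *m v) i 0))%:C.
Proof. by rewrite /A qform_adjmx_conj qform_diag. Qed.

Lemma qform_unitary_diag_ge0 v : 0 <= reC (qform A v).
Proof.
by rewrite qform_unitary_diag; apply: sumr_ge0 => i _; rewrite mulr_ge0 ?cnorm2_ge0.
Qed.

Lemma eigenvalue_unitary_diag i : eigenvalue A (c i)%:C.
Proof.
apply/eigenvalueP; exists (row i Q).
  rewrite /A -row_mul !mulmxA QQadj mul1mx row_mul row_diag_mx mxE.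
  by rewrite -scalemxAl -rowE.
apply/negP => /eqP Qi0.
have : row i (Q *m adjmx Q) = 0 by rewrite row_mul Qi0 mul0mx.
by rewrite QQadj => /rowP /(_ i); rewrite !mxE eqxx /= => /eqP; rewrite oner_eq0.
Qed.

(* [eigenvalue] is about row eigenvectors [v *m A = x *: v]; the Rayleigh quotient of
   the column vector [adjmx v] is [x], and it is a convex combination of the [c i]. *)
Lemma eigenvalue_unitary_diag_bounds x :
  eigenvalue A x%:C -> 0 <= x <= \sum_i c i.
Proof.
move=> /eigenvalueP [v Av v_neq0].
set u := adjmx v; set S := \sum_j cnorm2 (u j 0).
have Rayleigh : \sum_i c i * cnorm2 ((Q *m u) i 0) = x * S.
  have : qform A u = x%:C * S%:C.
    by rewrite /qform /u adjmxK Av -scalemxAl mxE /S -cdot_self /cdot adjmxK.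
  by rewrite qform_unitary_diag -rmorphM => /complexI.
have S_gt0 : 0 < S.
  rewrite lt0r sumr_ge0 ?andbT => [|j _]; last exact: cnorm2_ge0.
  apply/negP => /eqP /(psumr_eq0P (fun j _ => cnorm2_ge0 _)) u0.
  move/negP: v_neq0; apply; apply/eqP/rowP => j.
  have /cnorm2_eq0/eqP := u0 j isT.
  by rewrite /u !mxE conjC_eq0 => /eqP ->.
apply/andP; split.
  rewrite -(pmulr_lge0 _ S_gt0) -Rayleigh.
  by apply: sumr_ge0 => i _; rewrite mulr_ge0 ?cnorm2_ge0.
rewrite -(ler_pM2r S_gt0) -Rayleigh mulr_suml; apply: ler_sum => i _.
rewrite ler_wpM2l // /S -(sum_cnorm2_isometry u QadjQ) (bigD1 i) //= lerDl.
by apply: sumr_ge0 => k _; exact: cnorm2_ge0.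
Qed.

Lemma eig_min_unitary_diag_le_qform (v : 'cV[C]_n) :
  \sum_i cnorm2 (v i 0) = 1 -> eig_min A <= reC (qform A v).
Proof.
rewrite -(sum_cnorm2_isometry v QadjQ) qform_unitary_diag => v1.
have lb i : eig_min A <= c i.
  apply: ge_inf (eigenvalue_unitary_diag i).
  by exists 0 => y /eigenvalue_unitary_diag_bounds /andP[].
rewrite -[eig_min A]mulr1 -v1 mulr_sumr; apply: ler_sum => i _.
by rewrite ler_wpM2r ?cnorm2_ge0.
Qed.

Lemma qform_le_eig_max_unitary_diag (v : 'cV[C]_n) :
  \sum_i cnorm2 (v i 0) = 1 -> reC (qform A v) <= eig_max A.
Proof.
rewrite -(sum_cnorm2_isometry v QadjQ) qform_unitary_diag => v1.
have ub i : c i <= eig_max A.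
  apply: sup_upper_bound (eigenvalue_unitary_diag i); split.
    by exists (c i); exact: eigenvalue_unitary_diag.
  by exists (\sum_i c i) => y /eigenvalue_unitary_diag_bounds /andP[].
rewrite -[eig_max A]mulr1 -v1 mulr_sumr; apply: ler_sum => i _.
by rewrite ler_wpM2r ?cnorm2_ge0.
Qed.

End UnitaryDiag.

Section PosNegParts.
Variables (n : nat) (B : 'M[C]_n).

Lemma spectralmx_adjmx : spectralmx B *m adjmx (spectralmx B) = 1%:M.
Proof. by rewrite adjmxE; apply/unitarymxP; exact: spectral_unitarymx. Qed.

Lemma adjmx_spectralmx : adjmx (spectralmx B) *m spectralmx B = 1%:M.
Proof. exact: mulmx1C spectralmx_adjmx. Qed.

Lemma posmx_sub_negmx : B \is hermsymmx -> B = posmx B - negmx B.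
Proof.
move=> hB; have /hermitian_normalmx/orthomx_spectralP := hB.
rewrite invmx_unitary ?spectral_unitarymx // -adjmxE => {1}->.
rewrite /posmx /negmx -mulmxBl -mulmxBr -linearB /=.
congr (_ *m diag_mx _ *m _); apply/rowP => i; rewrite !mxE.
have /mxOverP /(_ 0 i) real_i := hermitian_spectral_diag_real hB.
rewrite -(RRe_real real_i) -rmorphB /=; congr (_%:C).
by rewrite /reC; set x := complex.Re _; rewrite !maxEle; case: ifP; case: ifP; lra.
Qed.

Lemma qform_pos_sub_neg (v : 'cV[C]_n) : B \is hermsymmx ->
  qform B v = qform (posmx B) v - qform (negmx B) v.
Proof. by move=> hB; rewrite {1}(posmx_sub_negmx hB) qformD qformN. Qed.

End PosNegParts.

Section WeightedMeans.
Variables (I : finType) (p : I -> R) (d : R).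
Hypotheses (d_gt0 : 0 < d) (sum_p : \sum_i p i = d) (p_ge0 : forall i, 0 <= p i).

Lemma weighted_mean_ge (a : I -> R) (lo c0 : R) :
  (forall i, c0 <= p i) -> (forall i, lo <= a i) -> (forall i, 0 <= a i) ->
  Num.max lo ((\sum_i a i) / d * c0) <= (\sum_i p i * a i) / d.
Proof.
move=> c0_le lo_le a_ge0; rewrite ge_max; apply/andP; split.
  rewrite ler_pdivlMr // -sum_p mulr_sumr; apply: ler_sum => i _.
  by rewrite mulrC ler_wpM2l.
rewrite mulrAC; apply: ler_wpM2r; first by rewrite invr_ge0 ltW.
by rewrite mulr_suml; apply: ler_sum => i _; rewrite mulrC ler_wpM2r.
Qed.

Lemma weighted_mean_le (b : I -> R) (hi : R) :
  (forall i, p i <= 1) -> (forall i, b i <= hi) -> (forall i, 0 <= b i) ->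
  (\sum_i p i * b i) / d <= Num.min hi ((\sum_i b i) / d).
Proof.
move=> p_le1 le_hi b_ge0; rewrite le_min; apply/andP; split.
  rewrite ler_pdivrMr // -sum_p mulr_sumr; apply: ler_sum => i _.
  by rewrite [hi * _]mulrC ler_wpM2l.
apply: ler_wpM2r; first by rewrite invr_ge0 ltW.
by apply: ler_sum => i _; rewrite ler_piMl.
Qed.

End WeightedMeans.

Section MacroWeights.
Variables (D : nat) (phi : 'I_D -> 'cV[C]_D).
Hypothesis phi_orth : forall n n' : 'I_D, cdot (phi n) (phi n') = (n == n')%:R.

Lemma sum_qform_orthonormal (A : 'M[C]_D) : \sum_n qform A (phi n) = \tr A.
Proof.
pose U : 'M[C]_D := \matrix_(j, n) phi n j 0.
have UadjU : adjmx U *m U = 1%:M.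
  apply/matrixP => n n'; rewrite [RHS]mxE -phi_orth /cdot !mxE.
  by apply: eq_bigr => j _; rewrite !mxE.
rewrite -[A in RHS]mulmx1 -(mulmx1C UadjU) mulmxA mxtrace_mulC mulmxA /mxtrace.
apply: eq_bigr => n _; rewrite /qform !mxE; apply: eq_bigr => k _.
by rewrite !mxE; congr (_ * _); apply: eq_bigr => j _; rewrite !mxE.
Qed.

Lemma sum_cnorm2_orthonormal n : \sum_j cnorm2 (phi n j 0) = 1.
Proof. by apply: (@complexI R); rewrite -cdot_self phi_orth eqxx. Qed.

Variables (m : nat) (blk : 'I_D -> 'I_m).

(* The block in [dimM] is a classical set, hence the [asbool] in its membership. *)
Lemma natr_dimM mu : (dimM blk mu)%:R = \sum_(j | blk j == mu) (1 : R).
Proof. by rewrite /dimM -sum1_card natr_sum; apply: eq_bigl => j; rewrite unfold_in /= asboolb. Qed.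

Lemma dimM_gt0 mu : (exists j, blk j = mu) -> (0 < dimM blk mu)%N.
Proof. by case=> j blk_j; apply/card_gt0P; exists j; rewrite unfold_in /= asboolb blk_j. Qed.

Definition macro_weight (mu : 'I_m) (n : 'I_D) : R :=
  \sum_(j | blk j == mu) cnorm2 (phi n j 0).

Lemma projM_diag mu : projM R blk mu = diag_mx (\row_j ((blk j == mu)%:R : R)%:C).
Proof. by apply/matrixP => i j; rewrite !mxE; case: (blk i == mu). Qed.

Lemma qform_projM mu n : qform (projM R blk mu) (phi n) = (macro_weight mu n)%:C.
Proof.
rewrite projM_diag qform_diag /macro_weight [in RHS]big_mkcond /=; congr _%:C.
by apply: eq_bigr => j _; case: (blk j == mu); rewrite ?mul1r ?mul0r.
Qed.

Lemma sum_macro_weight mu : \sum_n macro_weight mu n = (dimM blk mu)%:R.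
Proof.
apply: (@complexI R); rewrite rmorph_sum /=.
under eq_bigr do rewrite -qform_projM.
rewrite sum_qform_orthonormal projM_diag mxtrace_diag natr_dimM rmorph_sum /=.
by rewrite [in RHS]big_mkcond; apply: eq_bigr => j _; rewrite mxE; case: (blk j == mu).
Qed.

Lemma macro_weight_ge0 mu n : 0 <= macro_weight mu n.
Proof. by apply: sumr_ge0 => j _; exact: cnorm2_ge0. Qed.

Lemma macro_weight_le1 mu n : macro_weight mu n <= 1.
Proof.
rewrite -(sum_cnorm2_orthonormal n) [in leRHS](bigID (fun j => blk j == mu)) /=.
by rewrite lerDl; apply: sumr_ge0 => j _; exact: cnorm2_ge0.
Qed.

Lemma macro_weight_ge mu n (eps : R) : (forall j, cnorm2 (phi n j 0) <= eps) ->
  1 - (D%:R - (dimM blk mu)%:R) * eps <= macro_weight mu n.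
Proof.
move=> le_eps.
have out_mass : 1 - macro_weight mu n = \sum_(j | blk j != mu) cnorm2 (phi n j 0).
  by rewrite -(sum_cnorm2_orthonormal n) (bigID (fun j => blk j == mu)) /= addrC addrK.
have out_card : D%:R - (dimM blk mu)%:R = \sum_(j | blk j != mu) (1 : R).
  rewrite natr_dimM.
  have <- : \sum_(j < D) (1 : R) = D%:R by rewrite sumr_const card_ord.
  by rewrite (bigID (fun j => blk j == mu)) /= addrC addrK.
suff : 1 - macro_weight mu n <= (D%:R - (dimM blk mu)%:R) * eps by lra.
rewrite out_mass out_card mulr_suml; apply: ler_sum => j _; rewrite mul1r.
exact: le_eps.
Qed.

Lemma Mmn_macro_weight mu nu : Mmn blk phi mu nu =
  (((dimM blk mu)%:R)^-1 * \sum_n macro_weight mu n * macro_weight nu n)%:C.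
Proof.
rewrite /Mmn /MB natrC -fmorphV /= rmorphM rmorph_sum /=; congr (_ * _).
by apply: eq_bigr => n _; rewrite !qform_projM rmorphM.
Qed.

Variables (mu : 'I_m) (eps : R).
Hypothesis deloc : forall n j, cnorm2 (phi n j 0) <= eps.

Lemma Mmn_ge_dim_ratio nu :
  (((dimM blk nu)%:R / (dimM blk mu)%:R
     * (1 - (D%:R - (dimM blk mu)%:R) * eps))%:C <= Mmn blk phi mu nu).
Proof.
rewrite Mmn_macro_weight lecR mulrAC mulrC.
apply: ler_wpM2l; first by rewrite invr_ge0 ler0n.
rewrite -sum_macro_weight mulr_suml; apply: ler_sum => n _.
by rewrite [leRHS]mulrC ler_wpM2l ?macro_weight_ge0 ?macro_weight_ge.
Qed.

Hypothesis dim_gt0 : (0 < dimM blk mu)%N.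

Lemma Mmn_ge nu : ((1 - (D%:R - (dimM blk nu)%:R) * eps)%:C <= Mmn blk phi mu nu).
Proof.
have d_gt0 : 0 < ((dimM blk mu)%:R : R) by rewrite ltr0n.
rewrite Mmn_macro_weight lecR -(ler_pM2l d_gt0) mulrA mulfV ?lt0r_neq0 // mul1r.
rewrite -sum_macro_weight mulr_suml; apply: ler_sum => n _.
by rewrite ler_wpM2l ?macro_weight_ge0 ?macro_weight_ge.
Qed.

Lemma MB_ge (B : 'M[C]_D) : B \is hermsymmx ->
  Num.max (eig_min (posmx B))
     (reC (\tr (posmx B)) / (dimM blk mu)%:R * (1 - (D%:R - (dimM blk mu)%:R) * eps))
  - Num.min (eig_max (negmx B)) (reC (\tr (negmx B)) / (dimM blk mu)%:R)
  <= cmod (MB blk phi mu B).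
Proof.
move=> hB; apply: le_trans (reC_le_cmod _).
have d_gt0 : 0 < ((dimM blk mu)%:R : R) by rewrite ltr0n.
have QQadj := spectralmx_adjmx B; have QadjQ := adjmx_spectralmx B.
have pos_ge0 i : 0 <= Num.max (reC (spectral_diag B 0 i)) 0 by rewrite le_max lexx orbT.
have neg_ge0 i : 0 <= Num.max (- reC (spectral_diag B 0 i)) 0 by rewrite le_max lexx orbT.
set w := macro_weight mu; set a := fun n => reC (qform (posmx B) (phi n));
set b := fun n => reC (qform (negmx B) (phi n)).
have -> : reC (MB blk phi mu B) =
    (\sum_n w n * a n) / (dimM blk mu)%:R - (\sum_n w n * b n) / (dimM blk mu)%:R.
  rewrite -mulrBl -sumrB mulrC /MB natrC -fmorphV reC_mulRC reC_sum; congr (_ * _).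
  apply: eq_bigr => n _.
  by rewrite qform_projM reC_mulRC (qform_pos_sub_neg _ hB) reCD reCN mulrBr.
have [tr_a tr_b] : reC (\tr (posmx B)) = \sum_n a n /\ reC (\tr (negmx B)) = \sum_n b n.
  by rewrite -!sum_qform_orthonormal !reC_sum.
rewrite tr_a tr_b lerB //.
  apply: weighted_mean_ge => //.
  - exact: sum_macro_weight.
  - exact: macro_weight_ge0.
  - by move=> n; exact: macro_weight_ge.
  - by move=> n; exact: eig_min_unitary_diag_le_qform QQadj QadjQ pos_ge0 _
                          (sum_cnorm2_orthonormal n).
  - by move=> n; exact: qform_unitary_diag_ge0 _ pos_ge0 _.
apply: weighted_mean_le => //.
- exact: sum_macro_weight.
- exact: macro_weight_ge0.
- exact: macro_weight_le1.
- by move=> n; exact: qform_le_eig_max_unitary_diag QQadj QadjQ neg_ge0 _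
                        (sum_cnorm2_orthonormal n).
- by move=> n; exact: qform_unitary_diag_ge0 _ neg_ge0 _.
Qed.

End MacroWeights.
End ComplexMatrices.
Local Open Scope classical_set_scope.

Section Delocalization.
Variable R : realType.

Lemma exists_event_all_le d (T : measurableType d) (P : probability T R) (N : nat)
    (f : 'I_N -> T -> R) (c q : R) :
  (forall n, measurable_fun setT (f n)) ->
  (forall n, (P [set w | (c < f n w)%R] <= q%:E)%E) ->
  exists E, measurable E /\ ((1 - N%:R * q)%:E <= P E)%E /\
    forall w, E w -> forall n, f n w <= c.
Proof.
move=> mf Pq.
pose F (n : 'I_N) := [set w | c < f n w].
(* [Boole_inequality] is stated for sequences of sets indexed by [nat]. *)
pose A (k : nat) := oapp F set0 (insub k).
have FA (n : 'I_N) : A n = F n by rewrite /A valK.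
have mF n : measurable (F n).
  have := mf n measurableT _ (measurable_itv `]c, +oo[%R).
  by rewrite setTI; congr measurable; apply/seteqP; split => w /=; rewrite in_itv /= andbT.
have mA k : measurable (A k) by rewrite /A; case: insub => [n|] /=.
pose U := \big[setU/set0]_(i < N) A i.
have mU : measurable U by apply: bigsetU_measurable => i _.
exists (~` U); split; first exact: measurableC.
split; last first.
  move=> w Uw n; rewrite leNgt; apply/negP => fnw; apply: Uw.
  by rewrite /U -bigcup_mkord; exists (val n) => //=; rewrite FA.
rewrite probability_setC //.
have union_bound : (P U <= (N%:R * q)%:E)%E.
  apply: (@le_trans _ _ (\sum_(i < N) P (A i))%E); first exact: Boole_inequality.
  have -> : ((N%:R * q)%:E = \sum_(i < N) q%:E)%E.
    by rewrite sumEFin sumr_const card_ord mulr_natl.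
  by apply: lee_sum => i _; rewrite FA; exact: Pq.
have PU_fin : P U \is a fin_num.
  by rewrite ge0_fin_numE // (le_lt_trans (probability_le1 _ mU)) // ltey.
by rewrite -(fineK PU_fin) -EFinB lee_fin lerB // -lee_fin fineK.
Qed.

Lemma supnorm_measurable d (T : measurableType d) (D : nat) (f : T -> 'cV[R[i]]_D) :
  (forall j, measurable_fun setT (fun w => reC (f w j 0)) /\
             measurable_fun setT (fun w => imC (f w j 0))) ->
  measurable_fun setT (fun w => supnorm (f w)).
Proof.
move=> mf; rewrite /supnorm; elim: (index_enum _) => [|j s IH].
  by under eq_fun do rewrite big_nil; exact: measurable_cst.
under eq_fun do rewrite big_cons.
apply: measurable_realfun.measurable_maxr => //.
apply: measurableT_comp (measurable_realfun.continuous_measurable_fun (@sqrt_continuous R)) _.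
by apply: measurable_realfun.measurable_funD; apply: measurable_realfun.measurable_funX;
  case: (mf j).
Qed.

Lemma cnorm2_le_supnorm D (v : 'cV[R[i]]_D) (c : R) j :
  supnorm v <= c -> cnorm2 (v j 0) <= c ^+ 2.
Proof.
move=> le_c; rewrite -sqr_cmod.
have le_sup : cmod (v j 0) <= supnorm v := le_bigmax 0 (fun j => cmod (v j 0)) j.
have le_cmod : cmod (v j 0) <= c := le_trans le_sup le_c.
by rewrite ler_pXn2r ?nnegrE ?sqrtr_ge0 // (le_trans (sqrtr_ge0 _) le_cmod).
Qed.

Lemma sqr_powR_half (x tau : R) :
  (x `^ (tau - 2^-1)) ^+ 2 = (x `^ (1 - 2 * tau))^-1.
Proof.
rewrite -powR_mulrn ?powR_ge0 // -powRrM -powRN.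
by congr (_ `^ _); field.
Qed.

Lemma natr_mul_powRN_le (N : nat) (alpha : R) :
  N%:R * N%:R `^ (- alpha) <= N%:R `^ (1 - alpha).
Proof.
have [->|N_neq0] := eqVneq N 0%N; first by rewrite mul0r powR_ge0.
rewrite powRD; last by rewrite pnatr_eq0 N_neq0 implybT.
by rewrite powRr1 // ler0n.
Qed.

End Delocalization.

Unset Implicit Arguments.

Theorem mainTheorem12
  (R : realType)
  (p Pb : R) (L : nat) (mu : nat -> R)
  (hp : 0 < p) (hPb : 0 < Pb) (hmu : forall k, 0 <= mu k)
  (* for each D, a probability space and a random Hermitian matrix H^(D) *)
  (dsp : nat -> measure_display) (Omega : forall D : nat, measurableType (dsp D))
  (Pr : forall D : nat, probability (Omega D) R)
  (H : forall D : nat, Omega D -> 'M[R[i]]_D)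
  (hS1 : forall D, S1 (Pr D) (H D))
  (hS2 : forall D, S2 (Pr D) p L (H D))
  (hS3 : forall D, S3 (Pr D) Pb (H D))
  (hS4 : forall D, S4 (Pr D) mu (H D))
  (* an orthonormal eigenbasis phi_1..phi_D of H^(D), with eigenvalues lam *)
  (phi : forall D : nat, Omega D -> 'I_D -> 'cV[R[i]]_D)
  (lam : forall D : nat, Omega D -> 'I_D -> R)
  (heig : forall D w n, H D w *m phi D w n = (lam D w n)%:C *: phi D w n)
  (horth : forall D w (n n' : 'I_D), cdot (phi D w n) (phi D w n') = (n == n')%:R)
  (hphim : forall D (n j : 'I_D),
     measurable_fun setT (fun w => reC (phi D w n j 0)) /\
     measurable_fun setT (fun w => imC (phi D w n j 0)))
  (* delocalization function D_0 *)
  (D0 : R -> R -> nat)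
  (hD0 : forall (tau alpha : R), 0 < tau -> 0 < alpha ->
     forall D : nat, (D0 tau alpha <= D)%N -> forall n : 'I_D,
       (Pr D [set w | (D%:R `^ (tau - 2^-1) < supnorm (phi D w n))%R]
          <= (D%:R `^ (- alpha))%:E)%E)
  (tau alpha : R) (htau : 0 < tau) (halpha : 1 < alpha)
  (D : nat) (hD : (D0 tau alpha <= D)%N)
  (B : 'M[R[i]]_D) (hB : B \is hermsymmx)
  (* macro states: partition of [D] into consecutive blocks *)
  (m : nat) (blk : 'I_D -> 'I_m) (hblk : consecutive_partition blk) :
  exists E : set (Omega D),
    measurable E /\
    ((1 - D%:R `^ (1 - alpha))%:E <= Pr D E)%E /\
    forall w, E w ->
      (forall muM : 'I_m,
         Num.max (eig_min (posmx B))
                 (reC (\tr (posmx B)) / (dimM blk muM)%:R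
                   * (1 - (D%:R - (dimM blk muM)%:R) / D%:R `^ (1 - 2 * tau)))
         - Num.min (eig_max (negmx B)) (reC (\tr (negmx B)) / (dimM blk muM)%:R)
         <= cmod (MB blk (phi D w) muM B)) /\
      (forall muM nuM : 'I_m,
         (((dimM blk nuM)%:R / (dimM blk muM)%:R
             * (1 - (D%:R - (dimM blk muM)%:R) / D%:R `^ (1 - 2 * tau)))%:C
            <= Mmn blk (phi D w) muM nuM) /\
         ((1 - (D%:R - (dimM blk nuM)%:R) / D%:R `^ (1 - 2 * tau))%:C
            <= Mmn blk (phi D w) muM nuM)).
Proof.
have alpha_gt0 : 0 < alpha := lt_trans ltr01 halpha.
have [E [mE [PE deloc]]] := exists_event_all_le
  (fun n => supnorm_measurable (fun j => hphim D n j)) (hD0 tau alpha htau alpha_gt0 D hD).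
exists E; split => //; split.
  by apply: le_trans PE; rewrite lee_fin lerB // natr_mul_powRN_le.
move=> w Ew.
have deloc2 n j : cnorm2 (phi D w n j 0) <= (D%:R `^ (1 - 2 * tau))^-1.
  by rewrite -sqr_powR_half; exact: cnorm2_le_supnorm (deloc w Ew n).
have dim_gt0 muM : (0 < dimM blk muM)%N := dimM_gt0 (hblk.2 muM).
split => [muM | muM nuM]; first exact: (MB_ge (horth D w) deloc2 (dim_gt0 muM) hB).
split; first exact: (Mmn_ge_dim_ratio (horth D w) blk muM deloc2 nuM).
exact: (Mmn_ge (horth D w) deloc2 (dim_gt0 muM) nuM).
Qed.
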